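(* Let $M'=M[D,K]$ be a compatible minor of the weighted uncertainty matroid $\mathcal{M}$. If there is a circuit $C$ of $M'$ containing an element $e$ that has the unique maximum weight in $C$, then $M[D\cup\{e\},K]$ is a compatible minor of $\mathcal{M}$.
   Context: A weighted uncertainty matroid $\mathcal{M}=(E,\mathcal{I},A,w)$ consists of a matroid $M=(E,\mathcal{I})$ on a finite set $E$, for each $e\in E$ a non-empty finite union $A_e$ of bounded real intervals (each open or closed), a weight $w_e\in A_e$, and a query cost $c_e\ge0$. A minimum-weight basis (MWB) is a basis minimizing total weight. A weight assignment is $w^*$ with $w^*_e\in A_e$, consistent with $Q$ if $w^*_e=w_e$ on $Q$. $Q$ verifies an MWB $B$ if for every weight assignment consistent with $Q$, $B$ is an MWB with respect to it; a certificate for $\mathcal{M}$ is a set verifying some MWB, and $c^*$ denotes the minimum cost $\sum_{e\in Q}c_e$ of a certificate for $\mathcal{M}$. For $D,K\subseteq E$, $M[D,K]$ is the matroid obtained from $M$ by deleting $D$ and contracting $K$, with weights restricted to its ground set $E(M[D,K])=E\setminus(D\cup K)$. $M[D,K]$ is a compatible minor of $\mathcal{M}$ if there is a set $Q$ of cost $c^*$ that verifies an MWB $B$ of $\mathcal{M}$ with $K\subseteq B$ and $D\cap B=\emptyset$. *)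

From HB Require Import structures.
From mathcomp Require Import all_boot all_order all_algebra.
From mathcomp Require Import reals.

Set Implicit Arguments.
Unset Strict Implicit.
Unset Printing Implicit Defensive.

Import Order.TTheory GRing.Theory Num.Theory.
Local Open Scope ring_scope.

Record matroid (E : finType) := Matroid {
  indep : {set E} -> bool;
  indep0 : indep set0;
  indep_sub : forall I J : {set E}, J \subset I -> indep I -> indep J;
  indep_aug : forall I J : {set E}, indep I -> indep J -> (#|I| < #|J|)%N ->
      exists2 x, x \in J :\: I & indep (x |: I)
}.

Section Matroids.
Variable E : finType.
Variable M : matroid E.

Definition rank (X : {set E}) : nat :=
  \max_(I : {set E} | indep M I && (I \subset X)) #|I|.

Definition basis (B : {set E}) : Prop :=
  indep M B /\ forall x, x \notin B -> ~~ indep M (x |: B).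

(* The minor M[D,K] = (M \ D) / K, ground set E \ (D u K). *)
Definition minor_ground (D K : {set E}) : {set E} := ~: (D :|: K).

Definition minor_indep (D K I : {set E}) : bool :=
  (I \subset minor_ground D K) && (rank (I :|: K) == #|I| + rank K)%N.

Definition minor_circuit (D K C : {set E}) : Prop :=
  [/\ C \subset minor_ground D K, ~~ minor_indep D K C &
      forall C' : {set E}, C' \proper C -> minor_indep D K C'].
End Matroids.

Record uinterval (R : realType) := UItv { ilo : R; ihi : R; iclosed : bool }.

Definition in_uitv (R : realType) (I : uinterval R) (x : R) : bool :=
  if iclosed I then (ilo I <= x) && (x <= ihi I) else (ilo I < x) && (x < ihi I).

Definition uitv_nonempty (R : realType) (I : uinterval R) : bool :=
  if iclosed I then ilo I <= ihi I else ilo I < ihi I.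

(* an uncertainty area: a finite union of such intervals *)
Definition in_area (R : realType) (A : seq (uinterval R)) (x : R) : bool :=
  has (fun I => in_uitv I x) A.

Section Uncertainty.
Variables (R : realType) (E : finType) (M : matroid E)
          (A : E -> seq (uinterval R)) (w : E -> R) (c : E -> R).

Definition uncertainty_matroid : Prop :=
  forall e, [/\ (0 < size (A e))%N, all (@uitv_nonempty R) (A e),
                in_area (A e) (w e) & 0 <= c e].

Definition weight (w' : E -> R) (B : {set E}) : R := \sum_(x in B) w' x.

Definition is_MWB (w' : E -> R) (B : {set E}) : Prop :=
  basis M B /\ forall B', basis M B' -> weight w' B <= weight w' B'.

Definition weight_assignment (w' : E -> R) : Prop :=
  forall e, in_area (A e) (w' e).

Definition consistent (Q : {set E}) (w' : E -> R) : Prop :=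
  forall e, e \in Q -> w' e = w e.

Definition verifies (Q B : {set E}) : Prop :=
  forall w', weight_assignment w' -> consistent Q w' -> is_MWB w' B.

Definition certificate (Q : {set E}) : Prop := exists B, verifies Q B.

Definition cost (Q : {set E}) : R := \sum_(e in Q) c e.

Definition min_cost_certificate (Q : {set E}) : Prop :=
  certificate Q /\ forall Q', certificate Q' -> cost Q <= cost Q'.

Definition compatible_minor (D K : {set E}) : Prop :=
  exists Q B, [/\ min_cost_certificate Q, verifies Q B, is_MWB w B,
                  K \subset B & [disjoint D & B]].
End Uncertainty.

(* The certificate Q and the minimum-weight basis B witnessing that M[D,K] is
   compatible also witness M[D + e, K]; it only remains to see that e is not
   in B.  If it
   were, extend (C - e) + K, which is independent in M because C - e is
   independent in M[D,K] and K lies in B, inside ((C - e) + K) + B to an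
   independent J as large as B.  J avoids e, since C + K is dependent, so the
   exchange axiom replaces e in B by some x of J outside B.  As K lies in B,
   x belongs to C - e, hence is strictly lighter than e: the exchanged basis
   would be lighter than B. *)
From HB Require Import structures.
From mathcomp Require Import all_boot all_order all_algebra.
From mathcomp Require Import reals.

Set Implicit Arguments.
Unset Strict Implicit.
Unset Printing Implicit Defensive.

Import Order.TTheory GRing.Theory Num.Theory.
Local Open Scope ring_scope.

Section MatroidTheory.
Variables (E : finType) (M : matroid E).
Implicit Types (B I J K X : {set E}).

Lemma rank_indep {I} : indep M I -> rank M I = #|I|.
Proof.
move=> iI; apply/eqP; rewrite eqn_leq; apply/andP; split.
  by apply/bigmax_leqP => J /andP[_ sJI]; apply: subset_leq_card.
apply: (leq_bigmax_cond (P := fun J => indep M J && (J \subset I))).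
by rewrite iI subxx.
Qed.

Lemma indep_rankE X : indep M X = (rank M X == #|X|).
Proof.
apply/idP/eqP => [/rank_indep // | rX]; apply/negPn/negP => nX.
have X_gt0 : (0 < #|X|)%N.
  by rewrite card_gt0; apply: contraNneq nX => ->; apply: indep0.
suff : (rank M X < #|X|)%N by rewrite rX ltnn.
rewrite -(prednK X_gt0) ltnS; apply/bigmax_leqP => J /andP[iJ sJX].
rewrite -ltnS prednK //; apply: proper_card.
by rewrite properEneq sJX andbT; apply: contraNneq nX => <-.
Qed.

Lemma indep_extend I B : indep M I -> indep M B ->
  exists2 J, [/\ indep M J, I \subset J & J \subset I :|: B] & (#|B| <= #|J|)%N.
Proof.
move=> iI iB; pose P J := [&& indep M J, I \subset J & J \subset I :|: B].
have PI : P I by rewrite /P iI subxx subsetUl.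
have [J /and3P[iJ sIJ sJ] maxJ] := arg_maxnP (fun J => #|J|) PI.
exists J => //; rewrite leqNgt; apply/negP => ltJB.
have [x /setDP[xB xJ] ixJ] := indep_aug iJ iB ltJB.
have /maxJ : P (x |: J).
  rewrite /P ixJ (subset_trans sIJ (subsetUr _ _)) subUset sJ andbT.
  by rewrite sub1set inE xB orbT.
by rewrite /= cardsU1 xJ add1n ltnn.
Qed.

Lemma basis_of_card B J : basis M B -> indep M J -> (#|B| <= #|J|)%N ->
  basis M J.
Proof.
move=> [iB maxB] iJ leBJ; split => // y yJ; apply/negP => iyJ.
have ltB : (#|B| < #|y |: J|)%N by rewrite cardsU1 yJ ltnS.
have [z /setDP[_ zB] izB] := indep_aug iB iyJ ltB.
by move: (maxB z zB); rewrite izB.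
Qed.

Lemma basis_exchange B J e : basis M B -> e \in B -> indep M J ->
  e \notin J -> (#|B| <= #|J|)%N ->
  exists2 x, x \in J :\: B & basis M (x |: (B :\ e)).
Proof.
move=> bB eB iJ eJ leBJ.
have cardB : #|B| = #|B :\ e|.+1 by rewrite (cardsD1 e B) eB.
have ltBJ : (#|B :\ e| < #|J|)%N by rewrite -cardB.
have iBe : indep M (B :\ e) := indep_sub (subD1set B e) bB.1.
have [x /setDP[xJ xBe] ixBe] := indep_aug iBe iJ ltBJ.
have xB : x \notin B.
  by move: xBe; rewrite !inE negb_and negbK; case: eqP xJ eJ => [-> -> |].
exists x; first by rewrite inE xB.
by apply: basis_of_card bB ixBe _; rewrite cardsU1 xBe add1n cardB.
Qed.

Lemma minor_indepE D K I : indep M K -> I \subset minor_ground D K ->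
  minor_indep M D K I = indep M (I :|: K).
Proof.
move=> iK sI; have IK0 : I :&: K = set0.
  apply: disjoint_setI0; rewrite disjoints_subset (subset_trans sI) //.
  by rewrite setCS subsetUr.
by rewrite /minor_indep sI indep_rankE cardsU IK0 cards0 subn0 (rank_indep iK).
Qed.

Lemma minor_circuit_dep D K C : indep M K -> minor_circuit M D K C ->
  ~~ indep M (C :|: K).
Proof. by move=> iK [sC nC _]; rewrite -(minor_indepE iK sC). Qed.

Lemma minor_circuitD1_indep D K C e : indep M K -> minor_circuit M D K C ->
  e \in C -> indep M (C :\ e :|: K).
Proof.
move=> iK [sC _ minC] eC.
rewrite -(minor_indepE (D := D) iK) ?minC ?properD1 //.
exact: subset_trans (subD1set C e) sC.
Qed.

End MatroidTheory.

Lemma weight_exchange (R : realType) (E : finType) (w : E -> R)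
    (B : {set E}) (e x : E) : e \in B -> x \notin B ->
  weight w (x |: (B :\ e)) + w e = weight w B + w x.
Proof.
move=> eB xB; rewrite /weight (big_setD1 _ eB) big_setU1 /=; last first.
  by rewrite !inE negb_and xB orbT.
by rewrite [LHS]addrAC [RHS]addrC addrA.
Qed.

Lemma circuit_max_notin_MWB (R : realType) (E : finType) (M : matroid E)
    (w : E -> R) (B D K C : {set E}) (e : E) :
  is_MWB M w B -> K \subset B -> minor_circuit M D K C -> e \in C ->
  (forall f, f \in C -> f != e -> w f < w e) -> e \notin B.
Proof.
move=> [bB minB] sKB circC eC wmax; apply/negP => eB.
have iK : indep M K := indep_sub sKB bB.1.
have [J [iJ sIJ sJ] leBJ] :=
  indep_extend (minor_circuitD1_indep iK circC eC) bB.1.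
have eJ : e \notin J.
  apply: contra (minor_circuit_dep iK circC) => eJ; apply: indep_sub iJ.
  by rewrite -(setD1K eC) -setUA subUset sub1set eJ.
have [x /setDP[xJ xB] bBx] := basis_exchange bB eB iJ eJ leBJ.
have /andP[xe xC] : (x != e) && (x \in C).
  move: (subsetP sJ x xJ); rewrite !inE (negbTE xB) orbF.
  by case/orP=> [// | /(subsetP sKB)]; rewrite (negbTE xB).
have := minB _ bBx; rewrite -(lerD2r (w e)) weight_exchange // lerD2l.
by rewrite leNgt wmax.
Qed.

Theorem mainTheorem9 (R : realType) (E : finType) (M : matroid E)
    (A : E -> seq (uinterval R)) (w c : E -> R) (D K C : {set E}) (e : E) :
  uncertainty_matroid A w c ->
  compatible_minor M A w c D K ->
  minor_circuit M D K C -> e \in C ->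
  (forall f, f \in C -> f != e -> w f < w e) ->
  compatible_minor M A w c (e |: D) K.
Proof.
move=> _ [Q [B [minQ vQB mwB sKB dDB]]] circC eC wmax.
have eB := circuit_max_notin_MWB mwB sKB circC eC wmax.
exists Q, B; split => //.
by rewrite disjoints_subset subUset sub1set -disjoints_subset dDB andbT inE.
Qed.
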